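(* Let $d\ge 3$ and let $G_d$ be the group defined in the context. Then the element $a_1a_2\cdots a_d$ has infinite order in $G_d$.
   Context: Let $d\ge 3$, $X=\{1,\dots,d\}$, $X^*$ the free monoid on $X$, and $T$ the $d$-regular rooted tree with vertex set $X^*$ (root the empty word, $u$ adjacent to $ux$ for $x\in X$). $\mathrm{Aut}(T)$ is the group of root-preserving tree automorphisms, with product written left-to-right: $(gh)(u)=h(g(u))$. For $g\in\mathrm{Aut}(T)$ and $u\in X^*$ the section $g|_u\in\mathrm{Aut}(T)$ is defined by $g(uv)=g(u)\,g|_u(v)$. We write $g=(g|_1,\dots,g|_d)\lambda_g$, where $\lambda_g\in S_d$ is the permutation induced by $g$ on $X$ (so $g(xw)=\lambda_g(x)\,g|_x(w)$), and $e$ is the identity. For $j\in\mathbb{N}$, $\overline{j}\in\{1,\dots,d\}$ denotes the residue with $\overline j\equiv j \pmod d$. The group $G_d\le \mathrm{Aut}(T)$ is generated by $A=\{a_1,\dots,a_d\}$, where for each $i$, $a_i$ acts on the first level as the transposition $(i\ \overline{i+1})$, has sections $a_i|_i=a_i$, $a_i|_{\overline{i+1}}=a_{\overline{i+1}}$, and $a_i|_x=e$ for all other $x\in X$. Explicitly $a_1=(a_1,a_2,e,\dots,e)(1\,2)$, $a_2=(e,a_2,a_3,e,\dots,e)(2\,3)$, …, $a_{d-1}=(e,\dots,e,a_{d-1},a_d)(d-1\ d)$, $a_d=(a_1,e,\dots,e,a_d)(d\ 1)$. *)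

From mathcomp Require Import all_boot.
Set Implicit Arguments. Unset Strict Implicit. Unset Printing Implicit Defensive.

(* Alphabet X = {1,...,d} is encoded as 'I_d (letter j+1 <-> ordinal j).
   Vertices of the d-regular rooted tree T are words : seq 'I_d.
   The generator a_{k+1} (k : 'I_d) transposes k and ordS k (= k+1 mod d)
   on the first level, with sections a_{k+1}|_{k} = a_{k+1},
   a_{k+1}|_{ordS k} = a_{(k+1)+1 mod d}, identity elsewhere. *)
Fixpoint gen_act (d : nat) (k : 'I_d) (w : seq 'I_d) : seq 'I_d :=
  match w with
  | [::] => [::]
  | x :: w' =>
      if x == k then ordS k :: gen_act k w'
      else if x == ordS k then k :: gen_act (ordS k) w'
      else x :: w'
  end.

(* Product convention is left-to-right: (g h)(u) = h (g u).  Hence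
   a_1 a_2 ... a_d acts by applying a_1 first, then a_2, ..., a_d last. *)
Definition prod_act (d : nat) (u : seq 'I_d) : seq 'I_d :=
  foldl (fun w k => gen_act k w) u (enum 'I_d).

From mathcomp Require Import all_boot zify.

Set Implicit Arguments. Unset Strict Implicit. Unset Printing Implicit Defensive.

(* Write the letters as 0, ..., d-1 and g = a_0 a_1 ... a_(d-1). On the first level g has
   the (d-1)-cycle (1, d-1, d-2, ..., 2), and the section of g^(d-1) at 1 is
   h = a_1 a_0 a_(d-1) a_(d-2) ... a_2. In turn h has the (d-1)-cycle (0, 1, 3, 4, ..., d-1),
   and the section of h^(d-1) at 0 is g. So if g^k fixes the word 1 0 1 0 ... of length m,
   then (d-1)^m divides k; taking m = k shows that g^k <> 1 for k > 0. *)

Section FirstReturn.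

Variables (T : eqType) (f f' : seq T -> seq T) (x : T) (p : nat).
Hypothesis p_gt0 : 0 < p.
Hypothesis iter_return : forall w, iter p f (x :: w) = x :: f' w.
Hypothesis head_iter_moved : forall r w, 0 < r < p -> head x (iter r f (x :: w)) != x.

Lemma iter_return_mul q w : iter (q * p) f (x :: w) = x :: iter q f' w.
Proof. by elim: q => [|q IHq] //; rewrite mulSn iterD IHq iter_return. Qed.

Lemma iter_fixed_return k w :
  iter k f (x :: w) = x :: w -> p %| k /\ iter (k %/ p) f' w = w.
Proof.
rewrite {1}(divn_eq k p) addnC iterD iter_return_mul.
have := ltn_pmod k p_gt0; rewrite /dvdn.
case: (k %% p) => [|r] r_lt_p; first by case.
move=> fixed; have := @head_iter_moved r.+1 (iter (k %/ p) f' w) r_lt_p.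
by rewrite fixed eqxx.
Qed.

End FirstReturn.

Fixpoint alternating (T : Type) (x y : T) (m : nat) : seq T :=
  if m is m'.+1 then x :: alternating y x m' else [::].

Lemma map_alternating (T U : Type) (f : T -> U) x y m :
  map f (alternating x y m) = alternating (f x) (f y) m.
Proof. by elim: m x y => [|m IHm] x y //=; rewrite IHm. Qed.

Section AlternatingOrbit.

Variables (T : eqType) (f1 f2 : seq T -> seq T) (x1 x2 : T) (p : nat).
Hypothesis p_gt0 : 0 < p.
Hypothesis iter_return1 : forall w, iter p f1 (x1 :: w) = x1 :: f2 w.
Hypothesis iter_return2 : forall w, iter p f2 (x2 :: w) = x2 :: f1 w.
Hypothesis head_iter_moved1 :
  forall r w, 0 < r < p -> head x1 (iter r f1 (x1 :: w)) != x1.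
Hypothesis head_iter_moved2 :
  forall r w, 0 < r < p -> head x2 (iter r f2 (x2 :: w)) != x2.

Lemma dvdn_period_alternating m :
  (forall k, iter k f1 (alternating x1 x2 m) = alternating x1 x2 m -> p ^ m %| k) /\
  (forall k, iter k f2 (alternating x2 x1 m) = alternating x2 x1 m -> p ^ m %| k).
Proof.
elim: m => [|m [IH1 IH2]]; first by split=> k _; rewrite dvd1n.
split=> k /=.
- case/(iter_fixed_return p_gt0 iter_return1 head_iter_moved1) => p_dvd_k /IH2.
  by rewrite expnSr dvdn_divRL.
- case/(iter_fixed_return p_gt0 iter_return2 head_iter_moved2) => p_dvd_k /IH1.
  by rewrite expnSr dvdn_divRL.
Qed.

End AlternatingOrbit.

(* The action of [gen_act] on words over [nat], and that of a product of generators
   listed left to right; arithmetic modulo d is then available on letters. *)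
Fixpoint nat_gen_act (d k : nat) (w : seq nat) : seq nat :=
  match w with
  | [::] => [::]
  | x :: w' =>
      if x == k then k.+1 %% d :: nat_gen_act d k w'
      else if x == k.+1 %% d then k :: nat_gen_act d (k.+1 %% d) w'
      else x :: w'
  end.

Definition nat_act (d : nat) (s w : seq nat) : seq nat :=
  foldl (fun w k => nat_gen_act d k w) w s.

Lemma map_val_gen_act d (k : 'I_d) w :
  map val (gen_act k w) = nat_gen_act d k (map val w).
Proof.
elim: w k => [|x w IHw] k //=; rewrite -val_eqE.
case: ifP => _ /=; first by rewrite IHw.
by rewrite -val_eqE /=; case: ifP => _ //=; rewrite IHw.
Qed.

Lemma map_val_foldl_gen_act d (s u : seq 'I_d) :
  map val (foldl (fun w k => gen_act k w) u s) = nat_act d (map val s) (map val u).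
Proof. by elim: s u => [|k s IHs] u //=; rewrite IHs map_val_gen_act. Qed.

Lemma map_val_iter_prod_act d n (u : seq 'I_d) :
  map val (iter n (@prod_act d) u) = iter n (nat_act d (iota 0 d)) (map val u).
Proof.
elim: n => [|n IHn] //=.
by rewrite /prod_act map_val_foldl_gen_act val_enum_ord IHn.
Qed.

Lemma nat_act_cat d s1 s2 w : nat_act d (s1 ++ s2) w = nat_act d s2 (nat_act d s1 w).
Proof. by rewrite /nat_act foldl_cat. Qed.

Lemma nat_act_gen d k w : nat_act d [:: k] (k :: w) = k.+1 %% d :: nat_act d [:: k] w.
Proof. by rewrite /= eqxx. Qed.

Lemma nat_act_gen_succ d k x w :
  x = k.+1 %% d -> x != k -> nat_act d [:: k] (x :: w) = k :: nat_act d [:: x] w.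
Proof. by move=> -> /negbTE /= ->; rewrite eqxx. Qed.

Definition gen_inert (d x k : nat) := (x != k) && (x != k.+1 %% d).

Lemma nat_act_inert d s x w : all (gen_inert d x) s -> nat_act d s (x :: w) = x :: w.
Proof.
elim: s => [|k s IHs] //= /andP[/andP[/negbTE x_ne_k /negbTE x_ne_Sk] inert_s].
by rewrite /nat_act /= x_ne_k x_ne_Sk; apply: IHs.
Qed.

Lemma modSn_lt k d : k < d -> k.+1 %% d = if k.+1 == d then 0 else k.+1.
Proof. by move=> k_lt; case: eqP => [->|k_ne]; [rewrite modnn | rewrite modn_small; lia]. Qed.

(* The last generator d-1 moves the letter 0, its successor modulo d. *)
Lemma all_gen_inert_below d lo n x :
  lo + n <= d -> x < lo -> (0 < x) || (lo + n < d) -> all (gen_inert d x) (iota lo n).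
Proof.
move=> le_d x_lt wrap; apply/allP => k; rewrite mem_iota => /andP[lo_k k_lt].
by rewrite /gen_inert modSn_lt; [case: (k.+1 =P d); lia | lia].
Qed.

Lemma all_gen_inert_above d lo n x :
  lo + n <= d -> lo + n < x -> all (gen_inert d x) (iota lo n).
Proof.
move=> le_d x_gt; apply/allP => k; rewrite mem_iota => /andP[lo_k k_lt].
by rewrite /gen_inert modSn_lt; [case: (k.+1 =P d); lia | lia].
Qed.

Lemma iota_split m n j : m <= j < m + n ->
  iota m n = iota m (j - m) ++ j :: iota j.+1 (m + n - j.+1).
Proof.
move=> j_in; rewrite {1}(_ : n = (j - m) + (m + n - j.+1).+1); last lia.
by rewrite iotaD (_ : m + (j - m) = j) //; lia.
Qed.

Section Cycles.

Variable d : nat.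
Hypothesis d_ge3 : 3 <= d.

Definition g_word := iota 0 d.
Definition h_word := [:: 1; 0] ++ rev (iota 2 (d - 2)).

Lemma g_act_1 w : nat_act d g_word (1 :: w) = d.-1 :: nat_act d [:: 1; 0] w.
Proof.
have -> : g_word = [:: 0] ++ iota 1 (d - 2) ++ [:: d.-1].
  rewrite /g_word (iota_split (j := d.-1)); last lia.
  rewrite (_ : d.-1 - 0 = (d - 2).+1); last lia.
  by rewrite (_ : 0 + d - d.-1.+1 = 0); last lia.
rewrite !nat_act_cat (nat_act_gen_succ (k := 0)) //; last by rewrite modn_small; lia.
rewrite nat_act_inert; last by apply: all_gen_inert_below; lia.
rewrite (nat_act_gen_succ (k := d.-1)) -?nat_act_cat //.
- by rewrite prednK ?modnn; lia.
- by apply/eqP; lia.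
Qed.

Lemma g_act_ge2 j w : 2 <= j < d -> nat_act d g_word (j :: w) = j.-1 :: nat_act d [:: j] w.
Proof.
move=> j_in; rewrite /g_word (iota_split (j := j.-1)); last lia.
rewrite -cat1s !nat_act_cat nat_act_inert; last by apply: all_gen_inert_above; lia.
rewrite (nat_act_gen_succ (k := j.-1)); last 2 first.
- by rewrite prednK ?modn_small; lia.
- by apply/eqP; lia.
by rewrite nat_act_inert //; apply: all_gen_inert_below; lia.
Qed.

Lemma h_act_0 w : nat_act d h_word (0 :: w) = 1 :: nat_act d [:: 0] w.
Proof.
rewrite /h_word -cat1s !nat_act_cat nat_act_inert; last first.
  by apply: (all_gen_inert_below (lo := 1) (n := 1)); lia.
rewrite nat_act_gen modn_small; last lia.
by rewrite nat_act_inert // all_rev; apply: all_gen_inert_below; lia.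
Qed.

Lemma h_act_1 w : nat_act d h_word (1 :: w) = 3 %% d :: nat_act d [:: 1; 2] w.
Proof.
have -> : h_word = [:: 1] ++ [:: 0] ++ rev (iota 3 (d - 3)) ++ [:: 2].
  by rewrite /h_word (_ : d - 2 = (d - 3).+1) /= ?rev_cons -?cats1 //; lia.
rewrite !nat_act_cat nat_act_gen modn_small; last lia.
rewrite nat_act_inert; last by apply: (all_gen_inert_above (lo := 0) (n := 1)); lia.
rewrite nat_act_inert; last by rewrite all_rev; apply: all_gen_inert_below; lia.
by rewrite nat_act_gen -nat_act_cat.
Qed.

Lemma h_act_ge3 j w : 3 <= j < d -> nat_act d h_word (j :: w) = j.+1 %% d :: nat_act d [:: j] w.
Proof.
move=> j_in; rewrite /h_word (iota_split (j := j)); last lia.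
rewrite rev_cat rev_cons -cats1 -catA !nat_act_cat.
rewrite nat_act_inert; last by rewrite -all_rev; apply: (all_gen_inert_above (lo := 0) (n := 2)); lia.
rewrite nat_act_inert; last by rewrite all_rev; apply: all_gen_inert_below; lia.
rewrite nat_act_gen nat_act_inert // all_rev modSn_lt; last lia.
by case: (j.+1 =P d) => j_last; [apply: all_gen_inert_below | apply: all_gen_inert_above]; lia.
Qed.

Lemma iter_g_descend i v : i <= d - 2 ->
  iter i (nat_act d g_word) (d.-1 :: v) = d.-1 - i :: nat_act d (rev (iota (d - i) i)) v.
Proof.
elim: i => [|i IHi] i_le; first by rewrite subn0.
rewrite iterS IHi; last lia.
rewrite g_act_ge2; last lia.
rewrite -nat_act_cat (_ : d - i = (d - i.+1).+1); last lia.
by rewrite [iota _ i.+1]/= rev_cons cats1; congr (_ :: nat_act _ (rcons _ _) _); lia.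
Qed.

Lemma iter_g_return w : iter d.-1 (nat_act d g_word) (1 :: w) = 1 :: nat_act d h_word w.
Proof.
rewrite (_ : d.-1 = (d - 2).+1); last lia.
rewrite iterSr g_act_1 iter_g_descend // -nat_act_cat /h_word.
by congr (_ :: nat_act _ (_ ++ rev (iota _ _)) _); lia.
Qed.

Lemma head_iter_g_moved r w : 0 < r < d.-1 -> head 1 (iter r (nat_act d g_word) (1 :: w)) != 1.
Proof.
case: r => [|r] // r_lt; rewrite iterSr g_act_1 iter_g_descend /=; last lia.
by apply/eqP; lia.
Qed.

Lemma iter_h_ascend i v : 3 + i <= d ->
  iter i (nat_act d h_word) (3 %% d :: v) = (3 + i) %% d :: nat_act d (iota 3 i) v.
Proof.
elim: i => [|i IHi] i_le; first by rewrite addn0.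
rewrite iterS IHi; last lia.
rewrite (modn_small (m := 3 + i)); last lia.
rewrite h_act_ge3; last lia.
by rewrite -nat_act_cat addnS -[i.+1]addn1 iotaD.
Qed.

Lemma iter_h_return w : iter d.-1 (nat_act d h_word) (0 :: w) = 0 :: nat_act d g_word w.
Proof.
rewrite (_ : d.-1 = (d - 3) + 2); last lia.
rewrite iterD !iterS [iter 0 _ _]/= h_act_0 h_act_1 iter_h_ascend; last lia.
rewrite subnKC // modnn -!nat_act_cat /g_word.
by rewrite -[in iota 0 d](subnKC d_ge3) iotaD.
Qed.

Lemma head_iter_h_moved r w : 0 < r < d.-1 -> head 0 (iter r (nat_act d h_word) (0 :: w)) != 0.
Proof.
case: r => [|[|r]] // r_lt; first by rewrite iterS [iter 0 _ _]/= h_act_0.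
rewrite -addn2 iterD !iterS [iter 0 _ _]/= h_act_0 h_act_1 iter_h_ascend /=; last lia.
by rewrite modn_small //; lia.
Qed.

Lemma dvdn_period_g_alternating m k :
  iter k (nat_act d g_word) (alternating 1 0 m) = alternating 1 0 m -> d.-1 ^ m %| k.
Proof.
have d1_gt0 : 0 < d.-1 by lia.
exact: (dvdn_period_alternating d1_gt0 iter_g_return iter_h_return
  head_iter_g_moved head_iter_h_moved m).1.
Qed.

End Cycles.

Theorem lemma3p3 (d : nat) (hd : 3 <= d) :
  forall n : nat, 0 < n -> exists u : seq 'I_d, iter n (@prod_act d) u != u.
Proof.
move=> n n_gt0.
have [lt1d lt0d] : 1 < d /\ 0 < d by split; lia.
exists (alternating (Ordinal lt1d) (Ordinal lt0d) n); apply/eqP => fixed.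
have := congr1 (map val) fixed; rewrite map_val_iter_prod_act map_alternating.
move=> /(dvdn_period_g_alternating hd) /(dvdn_leq n_gt0).
have : n < d.-1 ^ n by apply: ltn_expl; lia.
lia.
Qed.
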